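(* Let $\mathfrak{A}$ be a sheaf of metric structures over a topological space $X$, let $\mathbb{F}$ be a filter of open subsets of $X$, and let $(\sigma_n)_{n}$ be a sequence of sections, all defined on an open set $U\in\mathbb{F}$, which is Cauchy with respect to the pseudometric $\rho_{\mathbb{F}}$. Then: (1) there exists a function $\mu_\infty$ defined on $U$ with $\mu_\infty(x)\in E_x$ for all $x\in U$ (not necessarily continuous) such that $\lim_{n\to\infty}\rho_{\mathbb{F}}(\sigma_n,\mu_\infty)=0$, where $\rho_{\mathbb{F}}$ is extended to such functions by the same formula; (2) if moreover $X$ is a regular topological space and the interior (in $E$) of the image of $\mu_\infty$ is nonempty, then there exists an open set $V\subseteq U$ such that $\mu_\infty\upharpoonright V$ is continuous.
   Context: A topological sheaf over $X$ is a pair $(E,p)$ with $p:E\to X$ a local homeomorphism; a section is a continuous $\sigma:U\to E$, $U\subseteq X$ open, with $p\circ\sigma=\mathrm{Id}_U$; $E_x=p^{-1}(x)$. A sheaf of metric structures $\mathfrak{A}$ on $X$ is such a sheaf where each fiber $E_x$ is the universe of a metric structure (in continuous logic) for a fixed metric signature, with $(E_x,d_x)$ a complete metric space of diameter $1$, and where the interpretations of predicates, functions, and the distance $d^{\mathfrak{A}}=\bigcup_x d_x$ are continuous on $\bigcup_x E_x^n$ (topologized by the basic open sets $\langle\sigma_1,\dots,\sigma_n\rangle=\{(\sigma_1(y),\dots,\sigma_n(y))\}$), constants are continuous global sections, and moduli of uniform continuity have positive infimum over $x$ at each $\varepsilon>0$. A filter of open sets is a nonempty family of nonempty open sets closed under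 finite intersections and open supersets. For $\sigma,\mu$ with domains in $\mathbb{F}$, $\mathbb{F}_{\sigma\mu}=\{W\cap\mathrm{dom}(\sigma)\cap\mathrm{dom}(\mu):W\in\mathbb{F}\}$ and $\rho_{\mathbb{F}}(\sigma,\mu)=\inf_{W\in\mathbb{F}_{\sigma\mu}}\sup_{x\in W}d_x(\sigma(x),\mu(x))$. *)

From HB Require Import structures.
From mathcomp Require Import all_boot all_order all_algebra.
From mathcomp Require Import all_classical all_reals all_analysis.
Set Implicit Arguments. Unset Strict Implicit. Unset Printing Implicit Defensive.
Import Order.TTheory GRing.Theory Num.Theory.
Import numFieldNormedType.Exports.
Local Open Scope classical_set_scope.
Local Open Scope ring_scope.

Record signature := Signature {
  fsym : Type; farity : fsym -> nat;
  psym : Type; parity : psym -> nat;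
  csym : Type }.

(* Raw data of a sheaf of metric structures over X with total space E.
   n-tuples of a fibre E_x are represented as pairs (x, e) with
   e : 'I_n -> E and p (e i) = x for all i (so that 0-ary tuples still
   remember their fibre). *)
Record sheaf_data (R : realType) (X E : topologicalType) (L : signature) := SheafData {
  sproj : E -> X;
  sdist : E -> E -> R;
  fun_interp : forall f : fsym L, X -> ('I_(farity f) -> E) -> E;
  pred_interp : forall P : psym L, X -> ('I_(parity P) -> E) -> R;
  const_interp : csym L -> X -> E }.

Arguments sproj {R X E L} _ _.
Arguments sdist {R X E L} _ _ _.
Arguments fun_interp {R X E L} _ _ _ _.
Arguments pred_interp {R X E L} _ _ _ _.
Arguments const_interp {R X E L} _ _ _.

Section Defs.
Context (R : realType) (X E : topologicalType) (L : signature).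
Implicit Types (A : sheaf_data R X E L).

Definition local_homeomorphism (p : E -> X) :=
  continuous p /\
  forall e : E, exists W : set E, exists g : X -> E,
    open W /\ W e /\ open (p @` W) /\
    (forall w, W w -> g (p w) = w) /\
    (forall y, (p @` W) y -> W (g y) /\ p (g y) = y) /\
    {within W, continuous p} /\ {within p @` W, continuous g}.

(* sigma is a section of A defined on the open set U (values outside U are
   irrelevant) *)
Definition is_section A (U : set X) (s : X -> E) :=
  [/\ open U, {within U, continuous s} & forall x, U x -> sproj A (s x) = x].

Definition in_fiber A n (x : X) (e : 'I_n -> E) := forall i, sproj A (e i) = x.

(* continuity of a map defined on  U_x E_x^n, for the topology generated by
   the basic open sets <sigma_1, ..., sigma_n> *)
Definition fcont A n (T : topologicalType) (f : X -> ('I_n -> E) -> T) :=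
  forall x e, in_fiber A x e ->
  forall B, nbhs (f x e) B ->
  exists W : set X, exists s : 'I_n -> X -> E,
    [/\ W x, (forall i, is_section A W (s i)), (forall i, s i x = e i) &
        forall z, W z -> B (f z (fun i => s i z))].

Definition dist2 A (x : X) (e : 'I_2 -> E) : R :=
  sdist A (e (@Ordinal 2 0 isT)) (e (@Ordinal 2 1 isT)).

Definition fiber_metric A :=
  forall a b c : E, sproj A a = sproj A b -> sproj A b = sproj A c ->
  [/\ 0 <= sdist A a b, sdist A a b <= 1, (sdist A a b = 0 <-> a = b),
      sdist A a b = sdist A b a & sdist A a c <= sdist A a b + sdist A b c].

Definition fiber_complete A :=
  forall (x : X) (u : nat -> E), (forall n, sproj A (u n) = x) ->
  (forall eps : R, 0 < eps -> exists N, forall m n, (N <= m)%N -> (N <= n)%N ->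
       sdist A (u m) (u n) < eps) ->
  exists a, sproj A a = x /\ (fun n => sdist A (u n) a) @ \oo --> (0 : R).

Definition is_metric_sheaf A :=
  local_homeomorphism (sproj A) /\
  fiber_metric A /\ fiber_complete A /\
  fcont A (dist2 A) /\
      (forall f x e, in_fiber A x e -> sproj A (fun_interp A f x e) = x) /\
      (forall f, fcont A (fun_interp A f)) /\
      (forall P x e, in_fiber A x e -> 0 <= pred_interp A P x e <= 1) /\
      (forall P, fcont A (pred_interp A P)) /\
      (forall c, is_section A setT (const_interp A c)) /\
      (* moduli of uniform continuity with positive infimum over x *)
      (forall f (eps : R), 0 < eps -> exists2 delta : R, 0 < delta &
         forall x a b, in_fiber A x a -> in_fiber A x b ->
         (forall i, sdist A (a i) (b i) < delta) ->
         sdist A (fun_interp A f x a) (fun_interp A f x b) <= eps) /\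
      (forall P (eps : R), 0 < eps -> exists2 delta : R, 0 < delta &
         forall x a b, in_fiber A x a -> in_fiber A x b ->
         (forall i, sdist A (a i) (b i) < delta) ->
         `|pred_interp A P x a - pred_interp A P x b| <= eps).

Definition open_filter (F : set (set X)) :=
  [/\ F !=set0,
      (forall W, F W -> open W /\ W !=set0),
      (forall V W, F V -> F W -> F (V `&` W)) &
      (forall V W, F V -> open W -> V `<=` W -> F W)].

(* rho_F(s, m) for (partial) functions s, m with domains Ds, Dm *)
Definition rho A (F : set (set X)) (Ds : set X) (s : X -> E)
    (Dm : set X) (m : X -> E) : R :=
  inf [set sup [set sdist A (s x) (m x) | x in W `&` Ds `&` Dm] | W in F].

Definition rho_cauchy A F (U : set X) (s : nat -> X -> E) :=
  forall eps : R, 0 < eps -> exists N, forall m n, (N <= m)%N -> (N <= n)%N ->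
    rho A F U (s m) U (s n) < eps.

End Defs.

From HB Require Import structures.
From mathcomp Require Import all_boot all_order all_algebra.
From mathcomp Require Import all_classical all_reals all_analysis.
From mathcomp Require Import lra.
Import Order.TTheory GRing.Theory Num.Theory.
Import numFieldNormedType.Exports.
Local Open Scope classical_set_scope.
Local Open Scope ring_scope.

(* Pass to a subsequence sigma_(M k) with rho(sigma_(M k), sigma_(M k+1)) < 2^-k
   and pick W_k in F on which the pointwise distance of these two sections is
   below 2^-k.  For x in W_0, ..., W_(j-1) the fibre sequence sigma_(M i)(x) has
   steps below 2^-i up to i = j, so taking its limit in the complete fibre (or,
   if x leaves some W_k, freezing it at the first such k) gives mu(x) within
   2 * 2^-j of sigma_(M j)(x) on a member of F.  For (2): since p (mu x) = x,
   near a point of the interior of the image of mu the map mu coincides with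
   the continuous local inverse of the local homeomorphism p. *)

Lemma sup_ge0 (R : realType) (S : set R) :
  (forall y, S y -> 0 <= y) -> 0 <= sup S.
Proof.
move=> S_ge0; have [[[y Sy] ubS]|/sup_out->//] := pselect (has_sup S).
exact: le_trans (S_ge0 _ Sy) (ub_le_sup ubS Sy).
Qed.

Lemma sup_le_ub_ge0 (R : realType) (S : set R) (c : R) :
  0 <= c -> ubound S c -> sup S <= c.
Proof.
move=> c_ge0 ubSc; have [S0|S0] := pselect (S !=set0); first exact: ge_sup.
suff -> : S = set0 by rewrite sup0.
by apply/seteqP; split=> // y Sy; apply: S0; exists y.
Qed.

Lemma exists_halfpow_lt {R : realType} {e : R} : 0 < e -> exists k, 2 ^- k < e.
Proof.
move=> e_gt0; have [N _ HN] := near_infty_natSinv_expn_lt (PosNum e_gt0).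
by exists N; have := HN N (leqnn N); rewrite mul1r.
Qed.

Lemma halfpowS (R : realType) (k : nat) : 2 ^- k.+1 = 2 ^- k / 2 :> R.
Proof. by rewrite exprS invfM mulrC. Qed.

Lemma sum_halfpow (R : realType) (j k : nat) : (j <= k)%N ->
  \sum_(j <= i < k) 2 ^- i = 2 * 2 ^- j - 2 * 2 ^- k :> R.
Proof.
elim: k => [|k IHk]; first by rewrite leqn0 => /eqP->; rewrite big_geq // subrr.
rewrite leq_eqVlt => /orP[/eqP<-|jk]; first by rewrite big_geq // subrr.
by rewrite big_nat_recr //= IHk // halfpowS; lra.
Qed.

Lemma fast_subsequence (P : nat -> nat -> nat -> Prop) :
  (forall k, exists N, forall m n, (N <= m)%N -> (N <= n)%N -> P k m n) ->
  exists M : nat -> nat, (forall k, (M k <= M k.+1)%N) /\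
    forall k m n, (M k <= m)%N -> (M k <= n)%N -> P k m n.
Proof.
move=> /choice[N HN]; exists (fun k => \sum_(i < k.+1) N i)%N; split.
  by move=> k; rewrite [X in (_ <= X)%N]big_ord_recr leq_addr.
move=> k m n km kn; have Nk : (N k <= \sum_(i < k.+1) N i)%N.
  by rewrite big_ord_recr leq_addl.
exact: HN (leq_trans Nk km) (leq_trans Nk kn).
Qed.

Lemma filter_bigcap_lt {T : Type} {F : set (set T)} {W : nat -> set T} :
  F !=set0 -> (forall V V', F V -> F V' -> F (V `&` V')) ->
  (forall i, F (W i)) -> forall j, exists2 V, F V & V `<=` \bigcap_(i in `I_j) W i.
Proof.
move=> [V0 FV0] FI FW; elim=> [|j [V FV sV]]; first by exists V0.
exists (V `&` W j); first exact: FI.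
move=> x [Vx Wjx] i; rewrite /= ltnS leq_eqVlt => /orP[/eqP-> //|ij].
exact: sV.
Qed.

Section Rho.
Context {R : realType} {X E : topologicalType} {L : signature}.
Context {A : sheaf_data R X E L} {F : set (set X)} {Ds Dm : set X} {s m : X -> E}.
Local Notation d x := (sdist A (s x) (m x)).
Hypothesis d_ge0 : forall x, Ds x -> Dm x -> 0 <= d x.

Lemma rho_ge0 : F !=set0 -> 0 <= rho A F Ds s Dm m.
Proof.
move=> [W FW]; apply: lb_le_inf; first by eexists; exists W.
by move=> _ [V FV <-]; apply: sup_ge0 => _ [x [[_ ?] ?] <-]; exact: d_ge0.
Qed.

Lemma rho_le {W : set X} {c : R} : F W -> 0 <= c ->
  (forall x, W x -> Ds x -> Dm x -> d x <= c) -> rho A F Ds s Dm m <= c.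
Proof.
move=> FW c_ge0 dc.
apply: (@le_trans _ _ (sup [set d x | x in W `&` Ds `&` Dm])).
  apply: ge_inf; last by exists W.
  exists 0 => _ [V FV <-]; apply: sup_ge0 => _ [x [[_ ?] ?] <-]; exact: d_ge0.
by apply: sup_le_ub_ge0 => // _ [x [[Wx ?] ?] <-]; exact: dc.
Qed.

Lemma rho_lt_witness {b eps : R} : F !=set0 ->
  (forall x, Ds x -> Dm x -> d x <= b) -> rho A F Ds s Dm m < eps ->
  exists2 W, F W & forall x, W x -> Ds x -> Dm x -> d x < eps.
Proof.
move=> [W0 FW0] d_le_b /(inf_lt (ex_intro _ _ (ex_intro2 _ _ W0 FW0 erefl))).
move=> [_ [W FW <-] supW_lt]; exists W => // x Wx Dsx Dmx.
apply: le_lt_trans supW_lt; apply: ub_le_sup; last by exists x.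
by exists b => _ [y [[_ ?] ?] <-]; exact: d_le_b.
Qed.

End Rho.

Section FiberSequence.
Context {R : realType} {X E : topologicalType} {L : signature}.
Context {A : sheaf_data R X E L} {x : X} {u : nat -> E}.
Hypotheses (fiberA : fiber_metric A) (u_x : forall n, sproj A (u n) = x).
Local Notation d := (sdist A).

Lemma fiber_dist_ge0 {a b} : sproj A a = x -> sproj A b = x -> 0 <= d a b.
Proof. by move=> pa pb; case: (fiberA a b b (etrans pa (esym pb)) erefl). Qed.

Lemma fiber_dist_triangle {a b c} : sproj A a = x -> sproj A b = x ->
  sproj A c = x -> d a c <= d a b + d b c.
Proof.
by move=> pa pb pc; case: (fiberA a b c (etrans pa (esym pb)) (etrans pb (esym pc))).
Qed.

Lemma fiber_distxx a : d a a = 0.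
Proof. by case: (fiberA a a a erefl erefl) => _ _ [_ ->]. Qed.

Lemma fiber_distC a b : sproj A a = x -> sproj A b = x -> d a b = d b a.
Proof. by move=> pa pb; case: (fiberA a b b (etrans pa (esym pb)) erefl). Qed.

Lemma fiber_telescope (eps : nat -> R) j k : (j <= k)%N ->
  (forall i, (j <= i < k)%N -> d (u i) (u i.+1) <= eps i) ->
  d (u j) (u k) <= \sum_(j <= i < k) eps i.
Proof.
elim: k => [|k IHk]; first by rewrite leqn0 => /eqP-> _; rewrite big_geq ?fiber_distxx.
rewrite leq_eqVlt ltnS => /orP[/eqP<- _|jk steps].
  by rewrite big_geq ?fiber_distxx.
rewrite big_nat_recr //=.
apply: le_trans (fiber_dist_triangle (u_x j) (u_x k) (u_x k.+1)) _.
apply: lerD; last by apply: steps; rewrite jk ltnSn.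
by apply: IHk => // i /andP[ji ik]; apply: steps; rewrite ji ltnS ltnW.
Qed.

Lemma fiber_fast_dist_le j k : (j <= k)%N ->
  (forall i, (j <= i < k)%N -> d (u i) (u i.+1) <= 2 ^- i) ->
  d (u j) (u k) <= 2 * 2 ^- j.
Proof.
move=> jk steps; apply: le_trans (@fiber_telescope (fun i => 2 ^- i) j k jk steps) _.
by rewrite sum_halfpow // gerBl mulr_ge0 // invr_ge0 exprn_ge0.
Qed.

Lemma fiber_fast_limit : fiber_complete A ->
  (forall i, d (u i) (u i.+1) <= 2 ^- i) ->
  exists2 a, sproj A a = x & forall j, d (u j) a <= 2 * 2 ^- j.
Proof.
move=> completeA steps.
have fast j k : (j <= k)%N -> d (u j) (u k) <= 2 * 2 ^- j.
  by move=> jk; apply: fiber_fast_dist_le => // i _; exact: steps.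
have [|a [pa ua]] := completeA x u u_x.
  move=> e e_gt0; have [j je] := exists_halfpow_lt (divr_gt0 e_gt0 (ltr0Sn _ 3)).
  exists j => m n jm jn.
  apply: le_lt_trans (fiber_dist_triangle (u_x m) (u_x j) (u_x n)) _.
  rewrite fiber_distC ?u_x //; have := fast _ _ jm; have := fast _ _ jn; lra.
exists a => // j; apply/ler_addgt0Pr => e e_gt0.
have [N _ HN] := iffLR (cvgrPdist_lt _ _) ua e e_gt0.
have := HN (maxn j N) (leq_maxr _ _); rewrite /= sub0r normrN ger0_norm; last first.
  exact: fiber_dist_ge0 (u_x _) pa.
have := fast _ _ (leq_maxl j N).
have := fiber_dist_triangle (u_x j) (u_x (maxn j N)) pa; lra.
Qed.

Lemma fiber_partial_limit (good : nat -> Prop) : fiber_complete A ->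
  (forall i, good i -> d (u i) (u i.+1) <= 2 ^- i) ->
  exists2 a, sproj A a = x &
    forall j, (forall i, (i < j)%N -> good i) -> d (u j) a <= 2 * 2 ^- j.
Proof.
move=> completeA steps; have [all_good|] := pselect (forall i, good i).
  have [a pa ua] := fiber_fast_limit completeA (fun i => steps i (all_good i)).
  by exists a.
move=> /existsNP exbad.
have [|k0 /asboolPn bad_k0 min_k0] := @ex_minnP (fun i => ~~ `[< good i >]).
  by case: exbad => i bad_i; exists i; apply/asboolPn.
exists (u k0) => // j good_j.
have jk0 : (j <= k0)%N by rewrite leqNgt; apply/negP => /good_j.
apply: fiber_fast_dist_le => // i /andP[_ ik0]; apply: steps.
apply: contrapT => bad_i; have := min_k0 i (introT (asboolPn _) bad_i).
by rewrite leqNgt ik0.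
Qed.

End FiberSequence.

Section RhoCauchyLimit.
Context {R : realType} {X E : topologicalType} {L : signature}.
Context {A : sheaf_data R X E L} {F : set (set X)} {U : set X}.
Context {sigma : nat -> X -> E}.
Hypotheses (fiberA : fiber_metric A) (completeA : fiber_complete A).
Hypotheses (F0 : F !=set0) (FI : forall V W, F V -> F W -> F (V `&` W)).
Hypotheses (sigma_x : forall n x, U x -> sproj A (sigma n x) = x)
           (cauchy : rho_cauchy A F U sigma).
Local Notation d := (sdist A).

Lemma section_dist_ge0 n {mu : X -> E} : (forall x, U x -> sproj A (mu x) = x) ->
  forall x, U x -> U x -> 0 <= d (sigma n x) (mu x).
Proof. by move=> mu_x x Ux _; apply: (fiber_dist_ge0 fiberA (sigma_x n x Ux) (mu_x x Ux)). Qed.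

Lemma sections_rho_lt_witness {m n} {eps : R} :
  rho A F U (sigma m) U (sigma n) < eps ->
  exists2 W, F W & forall x, W x -> U x -> d (sigma m x) (sigma n x) < eps.
Proof.
move=> rho_lt.
have d_le1 x : U x -> U x -> d (sigma m x) (sigma n x) <= 1.
  move=> Ux _; have pmn : sproj A (sigma m x) = sproj A (sigma n x) by rewrite !sigma_x.
  by case: (fiberA _ (sigma n x) _ pmn erefl).
have [W FW HW] := rho_lt_witness F0 d_le1 rho_lt.
by exists W => // x Wx Ux; exact: HW.
Qed.

Lemma fast_rho_subsequence : exists M : nat -> nat,
  (forall k, (M k <= M k.+1)%N) /\ forall k m n, (M k <= m)%N -> (M k <= n)%N ->
  rho A F U (sigma m) U (sigma n) < 2 ^- k.
Proof.
apply: fast_subsequence => k; apply: cauchy.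
by rewrite invr_gt0 exprn_gt0.
Qed.

Lemma rho_cauchy_limit : exists mu : X -> E,
  (forall x, U x -> sproj A (mu x) = x) /\
  (fun n => rho A F U (sigma n) U mu) @ \oo --> (0 : R).
Proof.
have [M [M_homo M_fast]] := fast_rho_subsequence.
have /choice[W HW] : forall k, exists W, F W /\
    forall x, W x -> U x -> d (sigma (M k) x) (sigma (M k.+1) x) < 2 ^- k.
  move=> k; have [W FW HW] := sections_rho_lt_witness (M_fast k _ _ (leqnn _) (M_homo k)).
  by exists W.
have /choice[mu Hmu] : forall x, exists a, U x -> sproj A a = x /\
    forall j, (forall i, (i < j)%N -> W i x) -> d (sigma (M j) x) a <= 2 * 2 ^- j.
  move=> x; have [Ux|nUx] := pselect (U x); last by exists (sigma 0%N x) => /nUx.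
  have [|a pa Ha] := @fiber_partial_limit _ _ _ _ A x (fun n => sigma (M n) x)
      fiberA (fun n => sigma_x _ x Ux) (fun i => W i x) completeA.
    by move=> i Wix; apply/ltW/(HW i).2.
  by exists a.
have mu_x x : U x -> sproj A (mu x) = x by move=> Ux; case: (Hmu x Ux).
exists mu; split => //; apply/cvgrPdist_lt => e e_gt0.
have [j je] := exists_halfpow_lt (divr_gt0 e_gt0 (ltr0Sn _ 2)).
have [V FV sV] := filter_bigcap_lt F0 FI (fun i => (HW i).1) j.
exists (M j) => // n /= jn.
have [W' FW' HW'] := sections_rho_lt_witness (M_fast j n (M j) jn (leqnn _)).
rewrite sub0r normrN ger0_norm; last exact: rho_ge0 (section_dist_ge0 n mu_x) F0.
apply: (@le_lt_trans _ _ (3 * 2 ^- j)); last lra.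
apply: (rho_le (section_dist_ge0 n mu_x) (FI _ _ FW' FV)).
  by rewrite mulr_ge0 // invr_ge0 exprn_ge0.
move=> x [W'x Vx] Ux _; have [_ Hm] := Hmu x Ux.
have := fiber_dist_triangle fiberA (sigma_x n x Ux) (sigma_x (M j) x Ux) (mu_x x Ux).
have := HW' x W'x Ux; have := Hm j (fun i ij => sV x Vx i ij); lra.
Qed.

End RhoCauchyLimit.

Lemma section_continuous_near_interior (X E : topologicalType) (p : E -> X)
    (U : set X) (mu : X -> E) :
  local_homeomorphism p -> (forall x, U x -> p (mu x) = x) ->
  interior (mu @` U) !=set0 ->
  exists V : set X, [/\ open V, V !=set0, V `<=` U & {within V, continuous mu}].
Proof.
move=> [_ lh] mu_x [e Oe]; set O := interior (mu @` U) in Oe.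
have [W [g [oW [We [opW [gpW [_ [_ g_cont]]]]]]]] := lh e.
pose V := p @` W `&` g @^-1` O.
have mu_g y : V y -> U y /\ mu y = g y.
  move=> [[w Ww <-] Og]; rewrite /= gpW // in Og *.
  by have [u Uu <-] := interior_subset Og; rewrite mu_x.
exists V; split.
- rewrite openE => y [[w Ww <-] Og].
  have := g_cont; rewrite continuous_open_subspace // => /(_ (p w)).
  move=> /(_ (mem_set (ex_intro2 _ _ w Ww erefl))) g_cont_w.
  have nO : nbhs (p w) (g @^-1` O).
    by apply: g_cont_w; apply: open_nbhs_nbhs; split => //; exact: open_interior.
  have nW : nbhs (p w) (p @` W) by apply: open_nbhs_nbhs; split => //; exists w.
  by apply: filterS (filterI nW nO) => z [].
- by exists (p e); split; [exists e | rewrite /= gpW].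
- by move=> y /mu_g [].
- have VW : V `<=` p @` W by move=> y [].
  have gV := continuous_subspaceW VW g_cont.
  apply: (subspace_eq_continuous _ gV) => y /set_mem /mu_g [_ mu_gy].
  by rewrite /from_subspace mu_gy.
Qed.

Theorem mainTheorem4 (R : realType) (X E : topologicalType) (L : signature)
  (A : sheaf_data R X E L) (HA : is_metric_sheaf A)
  (F : set (set X)) (HF : open_filter F)
  (U : set X) (HU : F U)
  (sigma : nat -> X -> E) (Hsec : forall n, is_section A U (sigma n))
  (Hcauchy : rho_cauchy A F U sigma) :
  exists mu : X -> E,
    [/\ (forall x, U x -> sproj A (mu x) = x),
        (fun n => rho A F U (sigma n) U mu) @ \oo --> (0 : R) &
        (regular_space X -> interior (mu @` U) !=set0 ->
         exists V : set X, [/\ open V, V !=set0, V `<=` U &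
                              {within V, continuous mu}])].
Proof.
case: HA => lhA [fiberA [completeA _]]; case: HF => F0 _ FI _.
have sigma_x n x : U x -> sproj A (sigma n x) = x by case: (Hsec n) => _ _; apply.
have [mu [mu_x mu_lim]] := rho_cauchy_limit fiberA completeA F0 FI sigma_x Hcauchy.
exists mu; split => // _.
exact: section_continuous_near_interior lhA mu_x.
Qed.
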